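(* Fix $n\in\mathbb N$ and let $a$ be a configuration reachable in PSSPM from $(\underline{n})$. Then for every word $\omega\in\{\mathcal L,\mathcal R\}^*$, $$\omega(\mathcal R(a))\ \overset{*}{\triangleleft}\ \omega(\mathcal L(a)).$$
   Context: A configuration is a sequence $(c_i)_{i\in\mathbb Z}$ of nonnegative integers with only finitely many positive values; $(\underline{n})$ denotes the configuration with $c_0=n$ and $c_i=0$ otherwise. Rule $\mathcal L$ at column $i$ is applicable if $c_{i-1}+2\le c_i$ and moves one grain from column $i$ to column $i-1$; rule $\mathcal R$ at column $i$ is applicable if $c_i\ge c_{i+1}+2$ and moves one grain from column $i$ to column $i+1$. A PSSPM transition applies rules simultaneously on every column where some rule is applicable, at most one rule per column; in a configuration reachable from $(\underline{n})$ there is at most one column on which both rules are applicable (a ''choice''). For a configuration $a$ reachable in PSSPM from $(\underline{n})$: $\mathcal L(a)$ is the configuration obtained by the PSSPM transition from $a$ in which rule $\mathcal L$ is chosen on the choice column if there is one (if there is no choice, the unique transition); if no rule is applicable in $a$, $\mathcal L(a)=a$. $\mathcal R(a)$ is defined symmetrically, choosing $\mathcal R$. For a word $\omega=\omega_1\cdots\omega_k$ over $\{\mathcal L,\mathcal R\}$, $\omega(a)=\omega_2\cdots\omega_k(\omega_1(a))$ (the empty word acts as identity). For configurations $a,b$, let $\Delta(a,b)$ be the sequence $\Delta_i(a,b)=a_i-b_i$. Write $a\overset{*}{\triangleleft} b$ iff every entry of $\Delta(a,b)$ lies in $\{-1,0,1\}$ and the nonzero entries, read in increasing index order, form a word in $((-1)\,1)^*$,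 i.e. alternate $-1,1,-1,1,\dots$, starting with $-1$ and ending with $1$ (in particular $a=b$ implies $a\overset{*}{\triangleleft} b$); equivalently $\Delta(a,b)\in(0^*(-1)0^*10^* )^*$ with zeros elsewhere. *)

From Stdlib Require Import ZArith List Bool.
Import ListNotations.
Open Scope Z_scope.

(* A configuration: column i |-> number of grains c_i.  Finite support is
   automatic for the configurations considered (those reachable from (n)). *)
Definition config := Z -> nat.

Definition init (n : nat) : config := fun i => if Z.eqb i 0 then n else 0%nat.

Definition appL (c : config) (i : Z) : bool := Nat.leb (c (i - 1)%Z + 2)%nat (c i).
Definition appR (c : config) (i : Z) : bool := Nat.leb (c (i + 1)%Z + 2)%nat (c i).

Inductive rule := RL | RR.

Definition is_L (o : option rule) : bool :=
  match o with Some RL => true | _ => false end.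
Definition is_R (o : option rule) : bool :=
  match o with Some RR => true | _ => false end.

Definition fire (c : config) (ch : Z -> option rule) : config :=
  fun i => (c i - (if ch i then 1 else 0)
            + (if is_L (ch (i + 1)%Z) then 1 else 0)
            + (if is_R (ch (i - 1)%Z) then 1 else 0))%nat.

Definition valid_choice (c : config) (ch : Z -> option rule) : Prop :=
  forall i, match ch i with
            | None => appL c i = false /\ appR c i = false
            | Some RL => appL c i = true
            | Some RR => appR c i = true
            end.

Definition psspm_step (c d : config) : Prop :=
  exists ch, valid_choice c ch /\ forall i, d i = fire c ch i.

Inductive reachable (n : nat) : config -> Prop :=
| reach_init : forall c, (forall i, c i = init n i) -> reachable n c
| reach_step : forall c d, reachable n c -> psspm_step c d -> reachable n d.

(* L(a): the PSSPM transition choosing L on the choice column(s);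
   R(a): choosing R.  If no rule is applicable, fire leaves c unchanged. *)
Definition choiceL (c : config) (i : Z) : option rule :=
  if appL c i then Some RL else if appR c i then Some RR else None.
Definition choiceR (c : config) (i : Z) : option rule :=
  if appR c i then Some RR else if appL c i then Some RL else None.

Definition stepL (c : config) : config := fire c (choiceL c).
Definition stepR (c : config) : config := fire c (choiceR c).

Definition step_of (r : rule) (c : config) : config :=
  match r with RL => stepL c | RR => stepR c end.

Definition act (w : list rule) (c : config) : config :=
  fold_left (fun c r => step_of r c) w c.

Definition delta (a b : config) (i : Z) : Z := Z.of_nat (a i) - Z.of_nat (b i).

Fixpoint alt (s : list Z) : bool :=
  match s with
  | [] => true
  | x :: y :: t => Z.eqb x (-1) && Z.eqb y 1 && alt t
  | _ => false
  end.

Definition window (N : nat) : list Z :=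
  map (fun k => Z.of_nat k - Z.of_nat N) (seq 0 (2 * N + 1)).

Definition tri_star (a b : config) : Prop :=
  exists N : nat,
    (forall i, Z.of_nat N < Z.abs i -> delta a b i = 0) /\
    (forall i, -1 <= delta a b i <= 1) /\
    alt (filter (fun x => negb (Z.eqb x 0)) (map (delta a b) (window N))) = true.

(* Write Δ(b,c) as the discrete derivative Δ_j = D_{j-1} - D_j of a finitely
   supported sequence D with values in {0,1}; the nonzero entries of such a Δ
   alternate -1, 1, starting with -1.  After one R-step and one L-step from a,
   D is the difference of the grain fluxes across each edge.  Applying the same
   move to both configurations adds the difference of their fluxes to D, and a
   local case analysis shows that D stays {0,1}-valued as long as the two
   configurations also satisfy a side condition: at a choice column of one of
   them where the other is one grain lower, both slopes are exactly 2.  This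
   side condition holds initially and is preserved by every move.
   Reachability from (n) is used only to know that a has finite support. *)

From Stdlib Require Import ZArith List Lia Bool.
Open Scope Z_scope.

Definition ht (x : config) (i : Z) : Z := Z.of_nat (x i).

Definition choice_of (r : rule) (x : config) : Z -> option rule :=
  match r with RL => choiceL x | RR => choiceR x end.

Lemma step_of_fire r x : step_of r x = fire x (choice_of r x).
Proof. now destruct r. Qed.

Definition flowR (r : rule) (x : config) (i : Z) : Z :=
  if is_R (choice_of r x i) then 1 else 0.
Definition flowL (r : rule) (x : config) (i : Z) : Z :=
  if is_L (choice_of r x i) then 1 else 0.
Definition flux (r : rule) (x : config) (i : Z) : Z :=
  flowR r x i - flowL r x (i + 1).

Lemma appL_reflect x i : reflect (ht x (i - 1) + 2 <= ht x i) (appL x i).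
Proof. apply iff_reflect. unfold appL, ht. rewrite Nat.leb_le. lia. Qed.

Lemma appR_reflect x i : reflect (ht x (i + 1) + 2 <= ht x i) (appR x i).
Proof. apply iff_reflect. unfold appR, ht. rewrite Nat.leb_le. lia. Qed.

Lemma appL_high x i : appL x i = true -> (2 <= x i)%nat.
Proof. unfold appL. rewrite Nat.leb_le. lia. Qed.

Lemma appR_high x i : appR x i = true -> (2 <= x i)%nat.
Proof. unfold appR. rewrite Nat.leb_le. lia. Qed.

Lemma valid_choice_high x ch i rho :
  valid_choice x ch -> ch i = Some rho -> (2 <= x i)%nat.
Proof.
  intros Hv E. specialize (Hv i). rewrite E in Hv.
  destruct rho; [apply appL_high | apply appR_high]; exact Hv.
Qed.

Lemma choice_of_valid r x : valid_choice x (choice_of r x).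
Proof.
  intro i. destruct r; simpl; [unfold choiceL | unfold choiceR];
    destruct (appL x i) eqn:EL, (appR x i) eqn:ER; auto.
Qed.

Lemma flow_cases r x i :
  (flowR r x i = 0 /\ flowL r x i = 0 /\
     ht x (i - 1) + 2 > ht x i /\ ht x (i + 1) + 2 > ht x i) \/
  (flowR r x i = 1 /\ flowL r x i = 0 /\ ht x (i + 1) + 2 <= ht x i /\
     match r with RL => ht x (i - 1) + 2 > ht x i | RR => True end) \/
  (flowR r x i = 0 /\ flowL r x i = 1 /\ ht x (i - 1) + 2 <= ht x i /\
     match r with RL => True | RR => ht x (i + 1) + 2 > ht x i end).
Proof.
  unfold flowR, flowL, choice_of.
  destruct r; [unfold choiceL | unfold choiceR];
    destruct (appL_reflect x i), (appR_reflect x i); simpl; lia.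
Qed.

Lemma flow_bounds r x i :
  0 <= flowR r x i /\ 0 <= flowL r x i /\ flowR r x i + flowL r x i <= 1.
Proof. pose proof (flow_cases r x i). lia. Qed.

Lemma ht_step r x j :
  ht (step_of r x) j =
  ht x j + flowR r x (j - 1) - flowL r x j - flowR r x j + flowL r x (j + 1).
Proof.
  rewrite step_of_fire. unfold ht, fire, flowR, flowL.
  pose proof (valid_choice_high x (choice_of r x) j) as Hhigh.
  pose proof (choice_of_valid r x) as Hv.
  destruct (choice_of r x j) as [rho|] eqn:E;
    [specialize (Hhigh rho Hv eq_refl); destruct rho|];
    destruct (is_L (choice_of r x (j + 1))), (is_R (choice_of r x (j - 1)));
    simpl; lia.
Qed.

(* Column indices such as [j + 1 - 1] arise when the local lemmas are used at
   neighbouring columns; they are normalised so that [lia] sees equal atoms. *)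
Ltac norm_cols := rewrite ?Z.sub_add, ?Z.add_simpl_r in *.

Ltac case_flow :=
  match goal with
  | C : (_ /\ _ /\ _ /\ _) \/ _ |- _ =>
      cbv beta iota in C; destruct C as [(?&?&?&?)|[(?&?&?&?)|(?&?&?&?)]]
  end.
Ltac case_flows := repeat case_flow.
Ltac flow_lia := repeat (first [lia | case_flow]).

Definition choice_col (x : config) (p : Z) : Prop :=
  ht x (p - 1) + 2 <= ht x p /\ ht x (p + 1) + 2 <= ht x p.

Definition sharp_col (x : config) (p : Z) : Prop :=
  ht x (p - 1) + 2 = ht x p /\ ht x (p + 1) + 2 = ht x p.

Definition sharp_choices (b c : config) : Prop :=
  forall p, choice_col b p -> ht c p + 1 = ht b p -> sharp_col b p.

Lemma new_choice_sharp r x p :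
  ~ choice_col x p -> choice_col (step_of r x) p -> sharp_col (step_of r x) p.
Proof.
  unfold choice_col, sharp_col.
  rewrite (ht_step r x (p - 1)), (ht_step r x p), (ht_step r x (p + 1)).
  pose proof (flow_bounds r x (p - 1 - 1)); pose proof (flow_bounds r x (p + 1 + 1)).
  pose proof (flow_cases r x (p - 1)); pose proof (flow_cases r x p);
  pose proof (flow_cases r x (p + 1)).
  norm_cols. destruct r; flow_lia.
Qed.

(* [D j] is the prefix-sum difference Σ_{k ≤ j} (c_k - b_k), required to be 0
   or 1. *)
Definition prefix_gap (b c : config) (D : Z -> Z) : Prop :=
  (forall j, 0 <= D j <= 1) /\ (forall j, ht b j - ht c j = D (j - 1) - D j).

Lemma prefix_gap_sym b c D :
  prefix_gap b c D -> prefix_gap c b (fun j => 1 - D j).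
Proof.
  intros [HD Hgap]. split; intro j; [specialize (HD j) | specialize (Hgap j)]; lia.
Qed.

Section SameMove.

Variables (r : rule) (b c : config) (D : Z -> Z).
Hypotheses (Hgap : prefix_gap b c D)
  (Sb : sharp_choices b c) (Sc : sharp_choices c b).

Lemma gap_step_bounds i : 0 <= D i + (flux r b i - flux r c i) <= 1.
Proof.
  destruct Hgap as [HD Hd]. unfold flux.
  pose proof (Hd (i - 1)); pose proof (Hd i); pose proof (Hd (i + 1));
  pose proof (Hd (i + 1 + 1)).
  pose proof (HD (i - 1 - 1)); pose proof (HD (i - 1)); pose proof (HD i);
  pose proof (HD (i + 1)); pose proof (HD (i + 1 + 1)).
  pose proof (Sb i) as Sb0; pose proof (Sb (i + 1)) as Sb1;
  pose proof (Sc i) as Sc0; pose proof (Sc (i + 1)) as Sc1.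
  unfold choice_col, sharp_col in *.
  pose proof (flow_cases r b i); pose proof (flow_cases r b (i + 1));
  pose proof (flow_cases r c i); pose proof (flow_cases r c (i + 1)).
  clear Sb Sc Hd HD. norm_cols.
  (* The sharpness conditions matter only in a few cases; [lia] is much faster
     without them. *)
  destruct r; case_flows; first [clear Sb0 Sb1 Sc0 Sc1; lia | lia].
Qed.

Lemma prefix_gap_step :
  prefix_gap (step_of r b) (step_of r c) (fun i => D i + (flux r b i - flux r c i)).
Proof.
  split; [exact gap_step_bounds|]. intro j.
  rewrite (ht_step r b j), (ht_step r c j).
  destruct Hgap as [_ Hd]. specialize (Hd j).
  unfold flux. norm_cols. lia.
Qed.

Lemma sharp_choices_step : sharp_choices (step_of r b) (step_of r c).
Proof.
  intros q Hq Hc.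
  destruct (Z.le_gt_cases (ht b (q - 1) + 2) (ht b q));
    [destruct (Z.le_gt_cases (ht b (q + 1) + 2) (ht b q))|].
  2, 3: apply new_choice_sharp; [intros [? ?]; lia | exact Hq].
  exfalso.
  pose proof (gap_step_bounds (q - 1)); pose proof (gap_step_bounds q).
  destruct Hgap as [HD Hd].
  pose proof (Hd q); pose proof (HD (q - 1)); pose proof (HD q).
  pose proof (Sb q).
  unfold choice_col, sharp_col in *.
  rewrite (ht_step r b (q - 1)), (ht_step r b q), (ht_step r b (q + 1)) in *.
  rewrite (ht_step r c q) in *.
  pose proof (flow_bounds r b (q - 1 - 1)); pose proof (flow_bounds r b (q + 1 + 1)).
  pose proof (flow_bounds r c (q - 1)); pose proof (flow_bounds r c q);
  pose proof (flow_bounds r c (q + 1)).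
  pose proof (flow_cases r b (q - 1)); pose proof (flow_cases r b q);
  pose proof (flow_cases r b (q + 1)).
  clear Sb Sc Hd HD. unfold flux in *. norm_cols. destruct r; flow_lia.
Qed.

End SameMove.

Lemma sharp_choices_steps r1 r2 a : sharp_choices (step_of r1 a) (step_of r2 a).
Proof.
  intros q Hq Hc. unfold choice_col, sharp_col in *.
  rewrite (ht_step r1 a (q - 1)), (ht_step r1 a q), (ht_step r1 a (q + 1)) in *.
  rewrite (ht_step r2 a q) in *.
  pose proof (flow_bounds r1 a (q - 1 - 1)); pose proof (flow_bounds r1 a (q + 1 + 1)).
  pose proof (flow_cases r1 a (q - 1)); pose proof (flow_cases r1 a q);
  pose proof (flow_cases r1 a (q + 1)).
  pose proof (flow_cases r2 a (q - 1)); pose proof (flow_cases r2 a q);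
  pose proof (flow_cases r2 a (q + 1)).
  norm_cols. destruct r1, r2; flow_lia.
Qed.

Lemma flux_R_minus_L_bounds a i : 0 <= flux RR a i - flux RL a i <= 1.
Proof.
  unfold flux.
  pose proof (flow_cases RR a i); pose proof (flow_cases RR a (i + 1));
  pose proof (flow_cases RL a i); pose proof (flow_cases RL a (i + 1)).
  norm_cols. flow_lia.
Qed.

Lemma prefix_gap_init a :
  prefix_gap (stepR a) (stepL a) (fun i => flux RR a i - flux RL a i).
Proof.
  split; [exact (flux_R_minus_L_bounds a)|]. intro j.
  change (stepR a) with (step_of RR a). change (stepL a) with (step_of RL a).
  rewrite (ht_step RR a j), (ht_step RL a j). unfold flux. norm_cols. lia.
Qed.

Definition finsupp (f : Z -> Z) : Prop :=
  exists N, forall i, N < Z.abs i -> f i = 0.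

Lemma finsupp_add f g : finsupp f -> finsupp g -> finsupp (fun i => f i + g i).
Proof.
  intros [M Hf] [N Hg]. exists (Z.max M N). intros i Hi.
  rewrite Hf, Hg; lia.
Qed.

Lemma finsupp_sub f g : finsupp f -> finsupp g -> finsupp (fun i => f i - g i).
Proof.
  intros [M Hf] [N Hg]. exists (Z.max M N). intros i Hi.
  rewrite Hf, Hg; lia.
Qed.

Lemma fire_finsupp x ch :
  (forall i rho, ch i = Some rho -> (2 <= x i)%nat) ->
  finsupp (ht x) -> finsupp (ht (fire x ch)).
Proof.
  intros Hch [N HN].
  assert (Hidle : forall j, N < Z.abs j -> ch j = None /\ x j = 0%nat).
  { intros j Hj. specialize (HN j Hj). unfold ht in HN.
    destruct (ch j) as [rho|] eqn:E; [specialize (Hch j rho E); lia|].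
    split; [reflexivity | lia]. }
  exists (N + 1). intros i Hi. unfold ht, fire.
  destruct (Hidle i) as [-> ->]; [lia|].
  destruct (Hidle (i + 1)) as [-> _]; [lia|].
  destruct (Hidle (i - 1)) as [-> _]; [lia|].
  reflexivity.
Qed.

Lemma step_finsupp r x : finsupp (ht x) -> finsupp (ht (step_of r x)).
Proof.
  rewrite step_of_fire. apply fire_finsupp.
  intros i rho. apply valid_choice_high, choice_of_valid.
Qed.

Lemma flux_finsupp r x : finsupp (ht x) -> finsupp (flux r x).
Proof.
  intros [N HN]. exists (N + 1). intros i Hi. unfold flux.
  pose proof (flow_cases r x i); pose proof (flow_cases r x (i + 1)).
  pose proof (HN (i - 1)); pose proof (HN i); pose proof (HN (i + 1));
  pose proof (HN (i + 1 + 1)).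
  norm_cols. destruct r; flow_lia.
Qed.

Lemma reachable_finsupp n a : reachable n a -> finsupp (ht a).
Proof.
  induction 1 as [c Hc | c d _ IH [ch [Hv Hd]]].
  - exists 0. intros i Hi. unfold ht. rewrite Hc. unfold init.
    destruct (Z.eqb_spec i 0); [lia | reflexivity].
  - destruct (fire_finsupp c ch (fun i rho => valid_choice_high c ch i rho Hv) IH) as [N HN].
    exists N. intros i Hi. unfold ht. rewrite Hd. apply HN, Hi.
Qed.

Definition coupled (b c : config) : Prop :=
  finsupp (ht b) /\ finsupp (ht c) /\ sharp_choices b c /\ sharp_choices c b /\
  exists D, prefix_gap b c D /\ finsupp D.

Lemma coupled_step r b c : coupled b c -> coupled (step_of r b) (step_of r c).
Proof.
  intros (Fb & Fc & Sb & Sc & D & Hgap & FD).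
  refine (conj _ (conj _ (conj _ (conj _ _)))); try (apply step_finsupp; assumption).
  - exact (sharp_choices_step r b c D Hgap Sb Sc).
  - exact (sharp_choices_step r c b _ (prefix_gap_sym b c D Hgap) Sc Sb).
  - eexists. split; [exact (prefix_gap_step r b c D Hgap Sb Sc)|].
    apply finsupp_add; [exact FD | apply finsupp_sub; apply flux_finsupp; auto].
Qed.

Lemma coupled_act w : forall b c, coupled b c -> coupled (act w b) (act w c).
Proof.
  induction w as [|r w IH]; intros b c H; simpl; auto.
  apply IH, coupled_step, H.
Qed.

Lemma coupled_init a : finsupp (ht a) -> coupled (stepR a) (stepL a).
Proof.
  intro Fa. refine (conj _ (conj _ (conj _ (conj _ _)))).
  - exact (step_finsupp RR a Fa).
  - exact (step_finsupp RL a Fa).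
  - exact (sharp_choices_steps RR RL a).
  - exact (sharp_choices_steps RL RR a).
  - eexists. split; [exact (prefix_gap_init a)|].
    apply finsupp_sub; apply flux_finsupp; exact Fa.
Qed.

Lemma alt_jumps (E : nat -> Z) (HE : forall k, E k = 0 \/ E k = 1) :
  forall len m, E (m + len)%nat = 0 ->
  (E m = 0 -> alt (filter (fun x => negb (Z.eqb x 0))
                     (map (fun k => E k - E (S k)) (seq m len))) = true) /\
  (E m = 1 -> alt ((-1) :: filter (fun x => negb (Z.eqb x 0))
                     (map (fun k => E k - E (S k)) (seq m len))) = true).
Proof.
  induction len as [|len IH]; intros m Hend.
  - rewrite Nat.add_0_r in Hend. split; intros; [reflexivity | lia].
  - destruct (IH (S m)) as [IH0 IH1]; [rewrite <- Hend; f_equal; lia|].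
    simpl.
    destruct (HE m) as [Hm|Hm], (HE (S m)) as [Hs|Hs]; rewrite Hm, Hs; simpl;
      split; intros; try lia; auto.
Qed.

Lemma tri_star_of_gap b c D : prefix_gap b c D -> finsupp D -> tri_star b c.
Proof.
  intros [HD Hd] [N HN].
  assert (Ed : forall i, delta b c i = D (i - 1) - D i) by apply Hd.
  set (M := Z.to_nat (N + 1)).
  exists M. split; [|split].
  - intros i Hi. rewrite Ed, (HN i), (HN (i - 1)); lia.
  - intro i. rewrite Ed. pose proof (HD i); pose proof (HD (i - 1)). lia.
  - set (E := fun k : nat => D (Z.of_nat k - Z.of_nat M - 1)).
    assert (HE : forall k, E k = 0 \/ E k = 1)
      by (intro k; pose proof (HD (Z.of_nat k - Z.of_nat M - 1)); unfold E; lia).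
    unfold window. rewrite map_map.
    rewrite (map_ext _ (fun k => E k - E (S k))).
    2: { intro k. rewrite Ed. unfold E. do 2 f_equal. lia. }
    apply (alt_jumps E HE (2 * M + 1) 0); unfold E; apply HN; lia.
Qed.

Theorem proposition2 (n : nat) (a : config) (Ha : reachable n a)
  (w : list rule) :
  tri_star (act w (stepR a)) (act w (stepL a)).
Proof.
  destruct (coupled_act w _ _ (coupled_init a (reachable_finsupp n a Ha)))
    as (_ & _ & _ & _ & D & Hgap & FD).
  exact (tri_star_of_gap _ _ D Hgap FD).
Qed.
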